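(* Let the setting be as described in the context. For each $N\in\mathcal N$ with $\mathcal E_N\cap\mathcal E_I\neq\emptyset$ let $\theta_N\in M_h$ be the unique element vanishing on $\mathcal E_I\setminus\mathcal E_N$ such that for every $K\in\mathcal T_N$: $b(\theta_N,\lambda_N\chi_K)=r(\lambda_N\chi_K)$ and $b(\theta_N,\lambda_M\chi_K)=0$ for every vertex $M\neq N$ of $K$ (and set $\theta_N=0$ if $\mathcal E_N\cap\mathcal E_I=\emptyset$). Let $(u_h,\theta_h)\in DG_h\times M_h$ be the solution of the mixed problem $\tilde a_h(u_h,w)+b(\theta_h,w)=l_h(w)$ for all $w\in DG_h$, $b(\mu,u_h)=0$ for all $\mu\in M_h$. Then $$\theta_h=\sum_{N\in\mathcal N}\theta_N .$$
   Context: Let $\Omega\subset\mathbb R^2$ be a bounded domain with Lipschitz, piecewise smooth boundary, $f\in L^2(\Omega)$, $g\in H^{1/2}(\partial\Omega)$. Let $\Omega_0\supset\Omega$ be a polygonal background domain with a shape-regular triangulation $\mathcal T_{0,h}$. Let $\Omega_h$ be a polygonal domain with $\Omega\subset\Omega_h\subset\Omega_0$ such that for each triangle $K$ with $K\cap\partial\Omega_h\neq\emptyset$, $\Gamma_K:=K\cap\partial\Omega_h$ is a line segment; $f$ is extended to $\Omega_h\setminus\Omega$ and $g_h$ is a given function on $\partial\Omega_h$. Active mesh $\mathcal T_h=\{K\in\mathcal T_{0,h}:K\cap\Omega_h\neq\emptyset\}$, $\triangle_h=\bigcup_{K\in\mathcal T_h}K$, $\mathcal T_h^b=\{K:K\cap\partial\Omega_h\neq\emptyset\}$,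 $h_K=\operatorname{diam}K$. $\mathcal E_I$: interior edges of $\mathcal T_h$, each with length $h_F$ and fixed unit normal $\boldsymbol n_F$; jump $[\![v]\!]=v^+-v^-$ and average $\{v\}=\frac12(v^++v^-)$, where $v^\pm(\boldsymbol x)=\lim_{s\to0^+}v(\boldsymbol x\mp s\boldsymbol n_F)$ and $K_F^\pm$ are the neighbours ($\boldsymbol n_F$ outward to $K_F^+$). $\mathcal E_g=\{F\in\mathcal E_I:(K_F^+\cup K_F^-)\cap\partial\Omega_h\neq\emptyset\}$. $\boldsymbol n_h$ outward unit normal of $\partial\Omega_h$, $\partial_{\boldsymbol n_h}=\boldsymbol n_h\cdot\nabla$, $\partial_{\boldsymbol n_F}=\boldsymbol n_F\cdot\nabla$. $\beta,\gamma>0$ constants, $\beta$ large enough that $a_h$ is coercive on $CG_h$. $a_h(w,v)=(\nabla w,\nabla v)_{\Omega_h}-\langle\partial_{\boldsymbol n_h}w,v\rangle_{\partial\Omega_h}-\langle w,\partial_{\boldsymbol n_h}v\rangle_{\partial\Omega_h}+\sum_{K\in\mathcal T_h^b}\frac{\beta}{h_K}\langle w,v\rangle_{\Gamma_K}+\gamma\sum_{F\in\mathcal E_g}h_F\langle[\![\partial_{\boldsymbol n_F}w]\!],[\![\partial_{\boldsymbol n_F}v]\!]\rangle_F$; $l_h(v)=(f,v)_{\Omega_h}-\langle g_h,\partial_{\boldsymbol n_h}v\rangle_{\partial\Omega_h}+\sum_{K\in\mathcal T_h^b}\frac{\beta}{h_K}\langle g_h,v\rangle_{\Gamma_K}$;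 $\tilde a_h(v,w)=a_h(v,w)-\sum_{F\in\mathcal E_I}\langle\{\partial_{\boldsymbol n_F}v\},[\![w]\!]\rangle_{F\cap\Omega_h}-\sum_{F\in\mathcal E_I}\langle\{\partial_{\boldsymbol n_F}w\},[\![v]\!]\rangle_{F\cap\Omega_h}$. $CG_h=\{v\in H^1(\triangle_h):v|_K\in\mathbb P_1(K)\}$, $DG_h=\{v\in L^2(\triangle_h):v|_K\in\mathbb P_1(K)\}$; $u_h$ (first component of the mixed solution) equals the CutFEM solution in $CG_h$. Residual: $r(w)=l_h(w)-\tilde a_h(u_h,w)$, $w\in DG_h$. $\mathcal N$: vertices of $\mathcal T_h$, $\mathcal N_I$: those not on $\partial\triangle_h$; $\mathcal T_N,\mathcal E_N$: elements/edges with vertex $N$; $\mathfrak s_N(F)=\pm1$ according as $\boldsymbol n_F$ is oriented counter-clockwise around $N$ or not. $\lambda_M$: hat function of vertex $M$; $\chi_K$: indicator of $K$. $M_h=\{\mu\in L^2(\mathcal E_I):\mu|_F\in\mathbb P_1(F),\ \sum_{F\in\mathcal E_N\cap\mathcal E_I}\mathfrak s_N(F)h_F\mu|_F(N)=0\ \forall N\in\mathcal N_I\}$, $b(\mu,v)=\sum_{F\in\mathcal E_I}\frac{h_F}{2}\sum_{M\text{ vertex of }F}\mu|_F(M)[\![v]\!](M)$. *)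

From mathcomp Require Import all_boot all_order all_algebra.
From mathcomp Require Import all_classical all_reals all_analysis.
Import Order.TTheory GRing.Theory Num.Theory.

Set Implicit Arguments.
Unset Strict Implicit.
Unset Printing Implicit Defensive.

Local Open Scope classical_set_scope.
Local Open Scope ring_scope.

Section Plane.
Variable R : realType.
Definition padd (p q : R * R) : R * R := (p.1 + q.1, p.2 + q.2).
Definition psub (p q : R * R) : R * R := (p.1 - q.1, p.2 - q.2).
Definition pscale (t : R) (p : R * R) : R * R := (t * p.1, t * p.2).
Definition dot (p q : R * R) : R := p.1 * q.1 + p.2 * q.2.
Definition cross (p q : R * R) : R := p.1 * q.2 - p.2 * q.1.
Definition pnorm (p : R * R) : R := Num.sqrt (dot p p).
Definition box (c : R * R) (e : R) : set (R * R) :=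
  [set y | `|y.1 - c.1| < e /\ `|y.2 - c.2| < e].
Definition segment (a b : R * R) : set (R * R) :=
  [set x | exists t : R, 0 <= t <= 1 /\ x = padd a (pscale t (psub b a))].
Definition osegment (a b : R * R) : set (R * R) :=
  [set x | exists t : R, 0 < t < 1 /\ x = padd a (pscale t (psub b a))].
Definition hull (s : seq (R * R)) : set (R * R) :=
  [set x | exists l : nat -> R, (forall i, 0 <= l i) /\
     \sum_(i < size s) l i = 1 /\
     x = (\sum_(i < size s) l i * (nth (0,0) s i).1,
          \sum_(i < size s) l i * (nth (0,0) s i).2)].
Definition is_open (A : set (R * R)) : Prop :=
  forall x, A x -> exists2 e : R, 0 < e & box x e `<=` A.
Definition is_connected (A : set (R * R)) : Prop :=
  forall B C : set (R * R), is_open B -> is_open C ->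
    A = B `|` C -> B `&` C = set0 -> B = set0 \/ C = set0.
Definition is_bounded (A : set (R * R)) : Prop :=
  exists M : R, forall x, A x -> `|x.1| <= M /\ `|x.2| <= M.
Definition bdry (A : set (R * R)) : set (R * R) :=
  [set x | forall e : R, 0 < e ->
     (exists y, box x e y /\ A y) /\ (exists y, box x e y /\ ~ A y)].
Definition polygonal_domain (A : set (R * R)) : Prop :=
  [/\ is_open A, is_connected A, is_bounded A, A !=set0 &
      exists s : seq ((R * R) * (R * R)),
        bdry A = [set x | exists2 pq, pq \in s & segment pq.1 pq.2 x]].
Definition lam2 := ((@lebesgue_measure R) \x (@lebesgue_measure R))%E.
End Plane.

(*   Vt : vertices  N  of the active mesh T_h                          *)
(*   El : elements  K  of the active mesh T_h                          *)
Record fem_data (R : realType) (Vt El : finType) := FemData {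
  coord : Vt -> R * R;
  ev : El -> 'I_3 -> Vt;
  ea : {set Vt} -> Vt;              (* endpoints of an edge F = {ea,eb}*)
  eb : {set Vt} -> Vt;
  nF : {set Vt} -> R * R;           (* fixed unit normal n_F of edge F *)
  Omh : set (R * R);
  aK : El -> R * R;                 (* Gamma_K = [aK K, bK K]          *)
  bK : El -> R * R;
  nh : R * R -> R * R;              (* outward unit normal of dOmega_h *)
  ff : R * R -> R;                  (* (extended) right-hand side f    *)
  gh : R * R -> R;
  beta : R;
  gamma : R }.

Section FEM.
Variables (R : realType) (Vt El : finType) (D : fem_data R Vt El).

Local Notation coord := (coord D).
Local Notation ev := (ev D).
Local Notation Om := (Omh D).

Definition vx (K : El) (i : 'I_3) : R * R := coord (ev K i).
Definition i0 : 'I_3 := ord0.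
Definition i1 : 'I_3 := ordS i0.
Definition i2 : 'I_3 := ordS i1.
Definition dblarea (K : El) : R :=
  cross (psub (vx K i1) (vx K i0)) (psub (vx K i2) (vx K i0)).
Definition bary (K : El) (i : 'I_3) (x : R * R) : R :=
  cross (psub (vx K (ordS i)) x) (psub (vx K (ordS (ordS i))) x) / dblarea K.
Definition gbary (K : El) (i : 'I_3) : R * R :=
  let d := psub (vx K (ordS i)) (vx K (ordS (ordS i))) in
  (d.2 / dblarea K, - d.1 / dblarea K).
Definition tri (K : El) : set (R * R) := hull [:: vx K i0; vx K i1; vx K i2].
Definition vset (K : El) : {set Vt} := [set ev K i | i : 'I_3].
Definition Deltah : set (R * R) := [set x | exists K, tri K x].
Definition hK (K : El) : R :=
  \big[Num.max/0]_(i : 'I_3) \big[Num.max/0]_(j : 'I_3) pnorm (psub (vx K i) (vx K j)).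

Definition conforming_mesh : Prop :=
  injective coord /\
  (forall K, injective (ev K)) /\
  (forall K, dblarea K != 0) /\
  (forall K K', K != K' -> vset K != vset K') /\
  (forall K K', K != K' ->
     tri K `&` tri K' = hull [seq coord M | M <- enum (vset K :&: vset K')]) /\
  (forall N : Vt, exists K i, ev K i = N).

(* DG_h : a function in DG_h is given by its three vertex values on each K *)
Definition DGfun := El -> 'I_3 -> R.
Definition pval (w : DGfun) (K : El) (x : R * R) : R :=
  \sum_(i : 'I_3) w K i * bary K i x.
Definition pgrad (w : DGfun) (K : El) : R * R :=
  (\sum_(i : 'I_3) w K i * (gbary K i).1, \sum_(i : 'I_3) w K i * (gbary K i).2).
Definition locv (w : DGfun) (K : El) (M : Vt) : R :=
  \sum_(i : 'I_3 | ev K i == M) w K i.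
(* CG_h = DG_h cap H^1 = continuous piecewise linears *)
Definition inCG (w : DGfun) : Prop :=
  forall K K' i j, ev K i = ev K' j -> w K i = w K' j.
(* lambda_M chi_K *)
Definition hatK (M : Vt) (K : El) : DGfun :=
  fun K' j => if (K' == K) && (ev K' j == M) then 1 else 0.

Definition isIE (F : {set Vt}) : bool :=
  (#|F| == 2)%N && (#|[set K | F \subset vset K]%SET| == 2)%N.
Definition elen (F : {set Vt}) : R := pnorm (psub (coord (eb D F)) (coord (ea D F))).
(* K = K_F^+ : n_F is the outward normal of K along F *)
Definition isPlus (K : El) (F : {set Vt}) : bool :=
  [forall i, [forall j, ((ev K i \notin F) && (ev K j \in F)) ==>
      (dot (nF D F) (vx K i) < dot (nF D F) (vx K j))]].
Definition epsKF (K : El) (F : {set Vt}) : R := if isPlus K F then 1 else -1.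
(* jump [[w]] = w^+ - w^- at a vertex M of F, and at a point x of F *)
Definition jumpv (w : DGfun) (F : {set Vt}) (M : Vt) : R :=
  \sum_(K | F \subset vset K) epsKF K F * locv w K M.
Definition jumpx (w : DGfun) (F : {set Vt}) (x : R * R) : R :=
  \sum_(K | F \subset vset K) epsKF K F * pval w K x.
Definition avgdn (w : DGfun) (F : {set Vt}) : R :=
  2^-1 * \sum_(K | F \subset vset K) dot (pgrad w K) (nF D F).
Definition jumpdn (w : DGfun) (F : {set Vt}) : R :=
  \sum_(K | F \subset vset K) epsKF K F * dot (pgrad w K) (nF D F).

(* multipliers : mu|_F in P1(F), given by its values mu F M at the endpoints *)
Definition Mfun := {set Vt} -> Vt -> R.
Definition bform (mu : Mfun) (w : DGfun) : R :=
  \sum_(F | isIE F) (elen F / 2 * \sum_(M in F) mu F M * jumpv w F M).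
Definition otherend (N : Vt) (F : {set Vt}) : Vt :=
  if N == ea D F then eb D F else ea D F.
(* s_N(F) = 1 iff n_F points counter-clockwise around N *)
Definition sgnN (N : Vt) (F : {set Vt}) : R :=
  if 0 < cross (psub (coord (otherend N F)) (coord N)) (nF D F) then 1 else -1.
(* N in N_I : N not on the boundary of Delta_h *)
Definition interiorV (N : Vt) : Prop :=
  exists2 e : R, 0 < e & box (coord N) e `<=` Deltah.
Definition inMh (mu : Mfun) : Prop :=
  forall N, interiorV N ->
    \sum_(F | isIE F && (N \in F)) sgnN N F * elen F * mu F N = 0.

Definition ept (F : {set Vt}) (t : R) : R * R :=
  padd (coord (ea D F)) (pscale t (psub (coord (eb D F)) (coord (ea D F)))).
Definition edge_int (F : {set Vt}) (phi : R * R -> R) : R :=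
  elen F * Rintegral (@lebesgue_measure R) [set t | 0 <= t <= 1 /\ Om (ept F t)]
                     (fun t => phi (ept F t)).
Definition Gamma (K : El) : set (R * R) := tri K `&` bdry Om.
Definition isTb (K : El) : bool := `[< exists x, Gamma K x >].
Definition gpt (K : El) (t : R) : R * R :=
  padd (aK D K) (pscale t (psub (bK D K) (aK D K))).
Definition gam_int (K : El) (phi : R * R -> R) : R :=
  pnorm (psub (bK D K) (aK D K)) *
  Rintegral (@lebesgue_measure R) [set t | 0 <= t <= 1] (fun t => phi (gpt K t)).
Definition el_int (K : El) (phi : R * R -> R) : R :=
  Rintegral (@lam2 R) (tri K `&` Om) phi.
Definition isEg (F : {set Vt}) : bool :=
  isIE F && [exists K, (F \subset vset K) && isTb K].

Definition ah (w v : DGfun) : R :=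
  \sum_K el_int K (fun _ => dot (pgrad w K) (pgrad v K))
  - \sum_(K | isTb K) gam_int K (fun x => dot (pgrad w K) (nh D x) * pval v K x)
  - \sum_(K | isTb K) gam_int K (fun x => pval w K x * dot (pgrad v K) (nh D x))
  + \sum_(K | isTb K) (beta D / hK K * gam_int K (fun x => pval w K x * pval v K x))
  + gamma D * \sum_(F | isEg F) (elen F * (elen F * (jumpdn w F * jumpdn v F))).

Definition lh (v : DGfun) : R :=
  \sum_K el_int K (fun x => ff D x * pval v K x)
  - \sum_(K | isTb K) gam_int K (fun x => gh D x * dot (pgrad v K) (nh D x))
  + \sum_(K | isTb K) (beta D / hK K * gam_int K (fun x => gh D x * pval v K x)).

Definition aht (v w : DGfun) : R :=
  ah v w
  - \sum_(F | isIE F) edge_int F (fun x => avgdn v F * jumpx w F x)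
  - \sum_(F | isIE F) edge_int F (fun x => avgdn w F * jumpx v F x).

Definition resid (uh w : DGfun) : R := lh w - aht uh w.

Definition fem_assumptions : Prop :=
  conforming_mesh /\
      (forall F : {set Vt}, #|F| = 2%N -> F = [set ea D F; eb D F]%SET) /\
      (forall F, isIE F -> dot (nF D F) (nF D F) = 1 /\
          dot (nF D F) (psub (coord (eb D F)) (coord (ea D F))) = 0) /\
      (polygonal_domain Om /\ measurable Om /\ Om `<=` Deltah /\
        (forall K, exists x, tri K x /\ Om x)) /\
      (forall K, isTb K -> Gamma K = segment (aK D K) (bK D K)) /\
      (forall K x, isTb K -> osegment (aK D K) (bK D K) x ->
         [/\ dot (nh D x) (nh D x) = 1,
             dot (nh D x) (psub (bK D K) (aK D K)) = 0 &
             exists2 e : R, 0 < e & forall s : R, 0 < s < e ->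
               ~ Om (padd x (pscale s (nh D x))) /\
               Om (psub x (pscale s (nh D x)))]) /\
      (measurable_fun Om (ff D) /\
        (@lam2 R).-integrable Om (fun x => ((ff D x) ^+ 2)%:E) /\
        (forall K, isTb K ->
          measurable_fun (`[0, 1] : set R) (fun t => gh D (gpt K t)) /\
          (@lebesgue_measure R).-integrable (`[0, 1] : set R)
               (fun t => ((gh D (gpt K t)) ^+ 2)%:E))) /\
      (* beta, gamma > 0 and beta large enough: a_h coercive on CG_h *)
      [/\ 0 < beta D, 0 < gamma D &
          forall v, inCG v -> (exists K i, v K i != 0) -> 0 < ah v v].

End FEM.

From Pilot Require Import Defs.
From mathcomp Require Import all_boot all_order all_algebra.
From mathcomp Require Import all_classical all_reals all_analysis.
From mathcomp Require Import ring lra.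
Import Order.TTheory GRing.Theory Num.Theory.

Set Implicit Arguments.
Unset Strict Implicit.
Unset Printing Implicit Defensive.

Local Open Scope ring_scope.

(** Put [mu := thetah - \sum_N theta_N].  Then [mu] lies in [M_h] and
    [b(mu, lambda_M chi_K) = 0] for every vertex [M] of every triangle [K]:
    the first mixed equation makes [thetah] reproduce the residual, and the
    [theta_N] reproduce it locally by construction.  Fix a vertex [N] and weigh an interior edge
    [F] at [N] by [y(F) = s_N(F) h_F mu_F(N)].  In a triangle [K] at [N],
    [b(mu, lambda_N chi_K) = 0] only involves the two edges of [K] at [N],
    and the orientation signs turn it into: [y] takes the same value on both
    edges, or vanishes if one of them is a boundary edge.  So the edges with
    [y = c <> 0] form a fan, closed under crossing triangles at [N].  As
    distinct triangles of a conforming mesh do not overlap, such a fan winds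
    all the way around [N], so [N] is an interior vertex, and any two such
    fans share an edge, so [y] takes a single nonzero value [c].  The
    constraint of [M_h] at [N] then reads [c * #{F | y(F) = c} = 0], which
    is absurd; hence [mu] vanishes. *)

Section PlaneGeometry.
Variable R : realType.
Implicit Types (a b c d e f p u w x : R * R) (al be t : R).

Definition lincomb al be a b : R * R := (al * a.1 + be * b.1, al * a.2 + be * b.2).

Definition norm1 p : R := `|p.1| + `|p.2|.

(* [w] is obtained from [d] by a counter-clockwise rotation of angle in (0, pi]. *)
Definition leftof d w : bool :=
  (0 < cross d w) || ((cross d w == 0) && (dot d w < 0)).

Lemma psub_eq0 p x : (psub p x == (0, 0)) = (p == x).
Proof. by case: p x => [? ?] [? ?]; rewrite /psub !xpair_eqE !subr_eq0. Qed.

Lemma psub_padd c u : psub (padd c u) c = u.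
Proof. by case: c u => [? ?] [? ?]; rewrite /psub /padd /=; congr pair; ring. Qed.

Lemma padd_psub c x : padd c (psub x c) = x.
Proof. by case: c x => [? ?] [? ?]; rewrite /psub /padd /=; congr pair; ring. Qed.

Lemma lincombC al be a b : lincomb al be a b = lincomb be al b a.
Proof. by rewrite /lincomb; congr pair; ring. Qed.

Lemma lincombZ t al be a b :
  lincomb (t * al) (t * be) a b = pscale t (lincomb al be a b).
Proof. by rewrite /lincomb /pscale /=; congr pair; ring. Qed.

Lemma cross_swap a b : cross b a = - cross a b.
Proof. by rewrite /cross; ring. Qed.

Lemma cross_self a : cross a a = 0.
Proof. by rewrite /cross mulrC subrr. Qed.

Lemma cross_psub_self x w : cross (psub x x) w = 0.
Proof. by rewrite /cross /psub /= !subrr !mul0r subrr. Qed.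

Lemma cross_lincombl al be a b w :
  cross (lincomb al be a b) w = al * cross a w + be * cross b w.
Proof. by rewrite /cross /lincomb /=; ring. Qed.

Lemma lincomb_cramer a b u : cross a b != 0 ->
  u = lincomb (cross u b / cross a b) (cross a u / cross a b) a b.
Proof.
rewrite /cross /lincomb => ab0; case: u => x y /=.
by congr pair; field.
Qed.

Lemma dot_ge0 p : 0 <= dot p p.
Proof. by rewrite /dot addr_ge0 // -expr2 sqr_ge0. Qed.

Lemma dot_gt0 p : p != (0, 0) -> 0 < dot p p.
Proof.
move=> p0; rewrite lt_neqAle dot_ge0 andbT eq_sym.
case: p p0 => x y p0; rewrite /dot /= paddr_eq0 -?expr2 ?sqr_ge0 // !sqrf_eq0.
by apply: contra p0 => /andP[/eqP -> /eqP ->].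
Qed.

Lemma cross_norm1_le u b (e : R) : `|u.1| <= e -> `|u.2| <= e ->
  `|cross u b| <= e * norm1 b.
Proof.
move=> h1 h2; apply: (le_trans (ler_normB _ _)); rewrite /norm1 !normrM.
have := normr_ge0 b.1; have := normr_ge0 b.2.
have := normr_ge0 u.1; have := normr_ge0 u.2; nra.
Qed.

Lemma divr_ge0_mul (y z : R) : 0 <= y * z -> 0 <= y / z.
Proof.
have [->|z0] := eqVneq z 0; first by rewrite invr0 mulr0.
have -> : y / z = y * z / z ^+ 2 by field.
by move=> yz; rewrite divr_ge0 ?sqr_ge0.
Qed.

Lemma leftof_cross_ge0 d w : leftof d w -> 0 <= cross d w.
Proof. by case/orP => [/ltW //|/andP[/eqP -> _]]. Qed.

Lemma leftof_trans d e f w : leftof d w -> leftof e w -> leftof f w ->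
  0 < cross d e -> 0 < cross e f -> 0 < cross d f.
Proof.
move=> hd he hf de ef.
have dw := leftof_cross_ge0 hd; have fw := leftof_cross_ge0 hf.
have crossK x y : cross x y * dot y w = cross x w * dot y y - dot x y * cross y w.
  by rewrite /cross /dot; ring.
have ew : 0 < cross e w.
  case/orP: he => // /andP[/eqP ew0 ew]; have := crossK d e.
  rewrite ew0 mulr0 subr0 => dew.
  have := mulr_ge0 dw (dot_ge0 e); have : cross d e * dot e w < 0 by rewrite pmulr_rlt0.
  lra.
rewrite ltNge; apply/negP => df.
have plucker : cross d f * cross e w = cross d e * cross f w + cross d w * cross e f.
  by rewrite /cross; ring.
have fw0 : cross f w = 0.
  apply/eqP; rewrite eq_le fw andbT -(pmulr_rle0 _ de).
  have := mulr_ge0 dw (ltW ef); have := mulr_le0_ge0 df (ltW ew).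
  lra.
have fwn : dot f w < 0 by case/orP: hf; [rewrite fw0 ltxx | case/andP].
have := crossK e f; rewrite fw0 mulr0 subr0 => efw.
have := mulr_ge0 (ltW ew) (dot_ge0 f); have : cross e f * dot f w < 0 by rewrite pmulr_rlt0.
lra.
Qed.

Lemma leftof_or_opp d u : d != (0, 0) -> u != (0, 0) ->
  leftof d u || leftof d (pscale (-1) u).
Proof.
move=> d0 u0; rewrite /leftof.
have -> : cross d (pscale (-1) u) = - cross d u by rewrite /cross /pscale /=; ring.
have -> : dot d (pscale (-1) u) = - dot d u by rewrite /dot /pscale /=; ring.
have [//|du|du] := ltrgtP 0 (cross d u); first by rewrite oppr_gt0 du orbT.
have : 0 < dot d d * dot u u by rewrite mulr_gt0 ?dot_gt0.
have -> : dot d d * dot u u = cross d u ^+ 2 + dot d u ^+ 2 by rewrite /cross /dot; ring.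
rewrite -du expr0n add0r oppr0 ltxx eqxx /= oppr_lt0.
by have [| |<-] := ltrgtP 0 (dot d u); rewrite ?orbT // expr0n ltxx.
Qed.

End PlaneGeometry.

Section Mesh.
Variables (R : realType) (Vt El : finType) (D : fem_data R Vt El).
Hypothesis HD : fem_assumptions D.

Local Notation coord := (Defs.coord D).
Local Notation ev := (Defs.ev D).
Implicit Types (F : {set Vt}) (K : El) (N A B M : Vt) (mu : Mfun R Vt).

Lemma coord_inj : injective coord.
Proof. by case: HD => -[]. Qed.

Lemma ev_inj K : injective (ev K).
Proof. by case: HD => -[_ []]. Qed.

Lemma dblarea_neq0 K : dblarea D K != 0.
Proof. by case: HD => -[_ [_ []]]. Qed.

Lemma vset_neq K K' : K != K' -> vset D K != vset D K'.
Proof. by case: HD => -[_ [_ [_ []]]] vset_inj *; apply: vset_inj. Qed.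

Lemma tri_cap K K' : K != K' -> (tri D K `&` tri D K')%classic =
  hull [seq coord M | M <- enum (vset D K :&: vset D K')].
Proof. by case: HD => -[_ [_ [_ [_ []]]]] cap *; apply: cap. Qed.

Lemma edge_ends F : #|F| = 2 -> F = [set ea D F; eb D F].
Proof. by case: HD => _ [ends _]; apply: ends. Qed.

Lemma nF_unit_perp F : isIE D F ->
  dot (nF D F) (nF D F) = 1 /\
  dot (nF D F) (psub (coord (eb D F)) (coord (ea D F))) = 0.
Proof. by case: HD => _ [_ [nF_ok _]]; apply: nF_ok. Qed.

Definition edir (N A : Vt) : R * R := psub (coord A) (coord N).

Lemma edir_neq0 N A : N != A -> edir N A != (0, 0).
Proof. by rewrite psub_eq0 (inj_eq coord_inj) eq_sym. Qed.

Lemma ordS_i0 : ordS i0 = i1. Proof. exact: val_inj. Qed.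
Lemma ordS_i1 : ordS i1 = i2. Proof. exact: val_inj. Qed.
Lemma ordS_i2 : ordS i2 = i0. Proof. exact: val_inj. Qed.

Lemma ord3_cases (k : 'I_3) : [\/ k = i0, k = i1 | k = i2].
Proof.
case: k => [[|[|[|//]]] ?]; [constructor 1 | constructor 2 | constructor 3];
  exact: val_inj.
Qed.

Lemma ev_in_vset K i : ev K i \in vset D K.
Proof. exact: imset_f. Qed.

Lemma vset_ord3 K : vset D K = [set ev K i0; ev K i1; ev K i2].
Proof.
apply/setP => M; rewrite !inE; apply/imsetP/idP => [[i _ ->]|].
  by case: (ord3_cases i) => ->; rewrite eqxx ?orbT.
by case/orP => [/orP[]|] /eqP ->; eexists.
Qed.

Lemma card_vset K : #|vset D K| = 3.
Proof. by rewrite card_imset ?card_ord //; exact: ev_inj. Qed.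

Definition vidx K N : 'I_3 := odflt i0 [pick i | ev K i == N].
Definition vnext K N := ev K (ordS (vidx K N)).
Definition vprev K N := ev K (ordS (ordS (vidx K N))).

Lemma ev_vidx K N : N \in vset D K -> ev K (vidx K N) = N.
Proof.
case/imsetP => i _ ->; rewrite /vidx.
by case: pickP => [j /eqP //|/(_ i)]; rewrite eqxx.
Qed.

Lemma vnext_vprevP K N : N \in vset D K ->
  [/\ vset D K = [set N; vnext K N; vprev K N],
      [/\ N != vnext K N, N != vprev K N & vnext K N != vprev K N] &
      cross (edir N (vnext K N)) (edir N (vprev K N)) = dblarea D K].
Proof.
move=> NK; have := ev_vidx NK; rewrite /vnext /vprev vset_ord3.
case: (ord3_cases (vidx K N)) => -> <-; rewrite ?(ordS_i0, ordS_i1, ordS_i2).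
all: split; [ apply/setP => M; rewrite !inE;
               by case: (M == ev K i0) (M == ev K i1) (M == ev K i2) => [] [] []
             | by rewrite !(inj_eq (@ev_inj K))
             | by rewrite /edir /dblarea /vx /cross /psub /=; ring ].
Qed.

Definition corner K N A B := N \in vset D K /\
  (A = vnext K N /\ B = vprev K N \/ A = vprev K N /\ B = vnext K N).

Lemma corner_sym K N A B : corner K N A B -> corner K N B A.
Proof. by case=> NK [] [-> ->]; split => //; [right|left]. Qed.

Lemma corner_vnext K N : N \in vset D K -> corner K N (vnext K N) (vprev K N).
Proof. by move=> NK; split => //; left. Qed.

Lemma cornerP K N A B : corner K N A B ->
  [/\ vset D K = [set N; A; B], [/\ N != A, N != B & A != B] &
      `|cross (edir N A) (edir N B)| = `|dblarea D K|].
Proof.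
case=> NK; have [VK [NA NB AB] cr] := vnext_vprevP NK.
case=> -[-> ->]; first by split; [|split|rewrite cr].
split; first by rewrite VK finset.setUAC.
  by split; rewrite // eq_sym.
by rewrite cross_swap normrN cr.
Qed.

Lemma corner_cross_neq0 K N A B : corner K N A B -> cross (edir N A) (edir N B) != 0.
Proof. by case/cornerP => _ _ cr; rewrite -normr_eq0 cr normr_eq0 dblarea_neq0. Qed.

Lemma corner_vertex K N A B M : corner K N A B -> M \in vset D K ->
  [\/ M = N, M = A | M = B].
Proof.
case/cornerP => -> _ _; rewrite !inE => /orP[/orP[]|] /eqP ->;
  by [constructor 1|constructor 2|constructor 3].
Qed.

Lemma tri_convex K (l0 l1 l2 : R) x :
  0 <= l0 -> 0 <= l1 -> 0 <= l2 -> l0 + l1 + l2 = 1 ->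
  x = (l0 * (vx D K i0).1 + l1 * (vx D K i1).1 + l2 * (vx D K i2).1,
       l0 * (vx D K i0).2 + l1 * (vx D K i1).2 + l2 * (vx D K i2).2) ->
  tri D K x.
Proof.
move=> h0 h1 h2 hsum ->; exists (nth 0 [:: l0; l1; l2]); split.
  by case=> [|[|[|n]]] //=; rewrite nth_nil.
split; first by rewrite !big_ord_recl big_ord0 /= -hsum; ring.
by congr pair; rewrite !big_ord_recl big_ord0 /=; ring.
Qed.

Lemma corner_tri K N A B (al be : R) : corner K N A B ->
  0 <= al -> 0 <= be -> al + be <= 1 ->
  tri D K (padd (coord N) (lincomb al be (edir N A) (edir N B))).
Proof.
case=> NK hAB al0 be0 ab1.
suff tri_next x y : 0 <= x -> 0 <= y -> x + y <= 1 ->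
    tri D K (padd (coord N) (lincomb x y (edir N (vnext K N)) (edir N (vprev K N)))).
  case: hAB => -[-> ->]; first exact: tri_next.
  by rewrite lincombC; apply: tri_next; rewrite // addrC.
move=> x0 y0 xy1; rewrite /vnext /vprev.
have := ev_vidx NK; case: (ord3_cases (vidx K N)) => -> <-;
  rewrite ?(ordS_i0, ordS_i1, ordS_i2).
- apply: (@tri_convex _ (1 - x - y) x y); [lra.. |].
  by rewrite /padd /lincomb /edir /psub /vx /=; congr pair; ring.
- apply: (@tri_convex _ y (1 - x - y) x); [lra.. |].
  by rewrite /padd /lincomb /edir /psub /vx /=; congr pair; ring.
- apply: (@tri_convex _ x y (1 - x - y)); [lra.. |].
  by rewrite /padd /lincomb /edir /psub /vx /=; congr pair; ring.
Qed.

Lemma tri_cap_on_line K K' (c w p : R * R) : K != K' -> tri D K p -> tri D K' p ->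
  (forall M, M \in vset D K -> M \in vset D K' -> cross (psub (coord M) c) w = 0) ->
  cross (psub p c) w = 0.
Proof.
move=> KK' pK pK' shared.
have : (tri D K `&` tri D K')%classic p by split.
rewrite tri_cap // => -[l [l0 [l1 ->]]].
set s := [seq coord M | M <- enum (vset D K :&: vset D K')].
have : \sum_(i < size s) l i * cross (psub (nth (0, 0) s i) c) w = 0.
  apply: big1 => i _; have : nth (0, 0) s i \in s by apply: mem_nth.
  by case/mapP => M; rewrite mem_enum inE => /andP[MK MK'] ->; rewrite shared ?mulr0.
rewrite /cross /psub /= => sum0; rewrite -[X in _ = X]sum0.
rewrite [RHS](eq_bigr (fun i : 'I_(size s) => l i * (nth (0, 0) s i).1 * w.2
   - l i * (nth (0, 0) s i).2 * w.1 - (c.1 * w.2 - c.2 * w.1) * l i)).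
  by rewrite !sumrB -!mulr_suml -mulr_sumr l1; ring.
by move=> i _; ring.
Qed.

(* The point [N + t (a + b)] would lie in both triangles, yet off every line
   through [N] and a vertex shared by them. *)
Lemma median_notin_cone K K' N A B A' B' (al be : R) : K != K' ->
  corner K N A B -> corner K' N A' B' -> 0 <= al -> 0 <= be ->
  lincomb 1 1 (edir N A) (edir N B) = lincomb al be (edir N A') (edir N B') -> False.
Proof.
move=> KK' cK cK' al0 be0 med.
have [VK [NA NB AB] _] := cornerP cK; have [VK' _ _] := cornerP cK'.
have ab0 := corner_cross_neq0 cK.
set a := edir N A in med ab0 *; set b := edir N B in med ab0 *.
have [t t_gt0 tK] : exists2 t : R, 0 < t & t * (2 + al + be) = 1.
  by exists (2 + al + be)^-1; [rewrite invr_gt0 | rewrite mulVf // gt_eqF]; lra.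
pose p := padd (coord N) (lincomb t t a b).
have pK : tri D K p by apply: (corner_tri cK); [exact: ltW | exact: ltW | nra].
have pK' : tri D K' p.
  rewrite /p -[t]mulr1 lincombZ med -lincombZ.
  by apply: (corner_tri cK'); [exact: mulr_ge0 (ltW _) _.. | nra].
have NK' : N \in vset D K' by rewrite VK' !inE eqxx.
have [BK'|BK'] := boolP (B \in vset D K').
- have AK' : A \notin vset D K'.
    apply: contra (vset_neq KK') => AK'.
    rewrite eqEcard !card_vset leqnn andbT VK.
    by apply/fintype.subsetP => M; rewrite !inE => /orP[/orP[]|] /eqP ->.
  suff : cross (psub p (coord N)) b = 0.
    rewrite psub_padd cross_lincombl cross_self mulr0 addr0 => /eqP.
    by rewrite mulf_eq0 gt_eqF //= (negbTE ab0).
  apply: (tri_cap_on_line KK' pK pK') => M MK MK'.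
  case: (corner_vertex cK MK) => eM; rewrite eM ?cross_psub_self ?cross_self //.
  by rewrite -eM MK' in AK'.
- suff : cross (psub p (coord N)) a = 0.
    rewrite psub_padd cross_lincombl cross_self mulr0 add0r cross_swap mulrN.
    by move/eqP; rewrite oppr_eq0 mulf_eq0 gt_eqF //= (negbTE ab0).
  apply: (tri_cap_on_line KK' pK pK') => M MK MK'.
  case: (corner_vertex cK MK) => eM; rewrite eM ?cross_psub_self ?cross_self //.
  by rewrite -eM MK' in BK'.
Qed.

Lemma side_notin_cone K1 K2 N A B1 B2 : K1 != K2 ->
  corner K1 N A B1 -> corner K2 N A B2 ->
  0 <= cross (edir N B1) (edir N B2) * cross (edir N A) (edir N B2) ->
  0 <= cross (edir N A) (edir N B1) * cross (edir N A) (edir N B2) -> False.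
Proof.
move=> K12 c1 c2 xi0 eta0.
have hb1 := lincomb_cramer (edir N B1) (corner_cross_neq0 c2).
apply: (median_notin_cone K12 c1 c2
  (al := 1 + cross (edir N B1) (edir N B2) / cross (edir N A) (edir N B2))
  _ (divr_ge0_mul eta0)); first by rewrite addr_ge0 ?divr_ge0_mul.
by rewrite {1}hb1 /lincomb /=; congr pair; ring.
Qed.

Lemma corners_opposite K1 K2 N A B1 B2 : K1 != K2 ->
  corner K1 N A B1 -> corner K2 N A B2 ->
  cross (edir N A) (edir N B1) * cross (edir N A) (edir N B2) < 0.
Proof.
move=> K12 c1 c2; rewrite ltNge; apply/negP => same.
have [inside|outside] :=
  leP 0 (cross (edir N B1) (edir N B2) * cross (edir N A) (edir N B2)).
  exact: (side_notin_cone K12 c1 c2).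
apply: (side_notin_cone (K1 := K2) _ c2 c1).
- by rewrite eq_sym.
- rewrite cross_swap mulNr oppr_ge0.
  have := sqr_ge0 (cross (edir N B1) (edir N B2)); nra.
- by rewrite mulrC.
Qed.

Lemma isIE_card2 F : isIE D F -> #|F| = 2.
Proof. by case/andP => /eqP. Qed.

Lemma card2_pair F N : #|F| = 2 -> N \in F ->
  exists2 A, N != A & F = [set N; A].
Proof.
move=> F2; have /finset.cards2P[x [y [xy ->]]] : #|F| == 2 by rewrite F2.
rewrite !inE => /orP[] /eqP ->.
  by exists y.
by exists x; rewrite 1?eq_sym // finset.setUC.
Qed.

Lemma pair_inj (N A A' : Vt) : N != A -> [set N; A] = [set N; A'] -> A = A'.
Proof.
move=> NA e; have : A \in [set N; A'] by rewrite -e !inE eqxx orbT.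
by rewrite !inE eq_sym (negbTE NA) => /eqP.
Qed.

Lemma isIE_two_tris F : isIE D F ->
  exists K1 K2, [/\ K1 != K2, F \subset vset D K1 & F \subset vset D K2].
Proof.
case/andP => _ /finset.cards2P[K1 [K2 [K12 eT]]].
have : K1 \in [set K | F \subset vset D K] by rewrite eT setU11.
have : K2 \in [set K | F \subset vset D K] by rewrite eT setU1r ?set11.
by rewrite !inE; exists K1, K2.
Qed.

Lemma edge_endsP F N A : F = [set N; A] -> N != A ->
  ea D F = N /\ eb D F = A \/ ea D F = A /\ eb D F = N.
Proof.
move=> eF NA; have F2 : #|F| = 2 by rewrite eF cards2 NA.
have eab := edge_ends F2.
set a := ea D F in eab *; set b := eb D F in eab *.
have ab : a != b.
  by apply: contra_eqN F2 => /eqP e; rewrite eab e finset.setUid cards1.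
have : a \in F by rewrite eab setU11.
have : b \in F by rewrite eab setU1r ?set11.
rewrite [in X in b \in X]eF [in X in a \in X]eF !inE.
move=> /orP[] /eqP eb' /orP[] /eqP ea'; rewrite ea' eb' ?eqxx in ab *;
  by [ | right | left | ].
Qed.

Lemma otherend_pair N A : N != A -> otherend D N [set N; A] = A.
Proof.
move=> NA; rewrite /otherend.
by case: (edge_endsP (erefl _) NA) => -[-> ->]; rewrite ?eqxx // (negbTE NA).
Qed.

Lemma nF_perp N A : isIE D [set N; A] -> N != A -> dot (nF D [set N; A]) (edir N A) = 0.
Proof.
move=> IE NA; have [_] := nF_unit_perp IE.
case: (edge_endsP (erefl _) NA) => -[-> ->] //.
by rewrite /dot /edir /psub /= => h; lra.
Qed.

Lemma elen_gt0 F : #|F| = 2 -> 0 < elen D F.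
Proof.
move=> F2; rewrite /elen /pnorm sqrtr_gt0 dot_gt0 // psub_eq0 (inj_eq coord_inj).
have := F2; apply: contra_eqN => /eqP e.
by rewrite (edge_ends F2) e finset.setUid cards1.
Qed.

Lemma corner_edges K N A B F : corner K N A B ->
  F \subset vset D K -> N \in F -> #|F| = 2 -> F = [set N; A] \/ F = [set N; B].
Proof.
move=> cK sF NF F2; have [M NM eF] := card2_pair F2 NF.
have : M \in vset D K by apply: (fintype.subsetP sF); rewrite eF !inE eqxx orbT.
case/(corner_vertex cK) => eM; rewrite eF eM;
  [by rewrite eM eqxx in NM | by left | by right].
Qed.

Lemma edge_corner K N F : isIE D F -> N \in F -> F \subset vset D K ->
  exists A B, F = [set N; A] /\ corner K N A B.
Proof.
move=> IE NF sF; have NK : N \in vset D K by exact: (fintype.subsetP sF).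
have cK := corner_vnext NK.
case: (corner_edges cK sF NF (isIE_card2 IE)) => ->.
  by exists (vnext K N), (vprev K N).
by exists (vprev K N), (vnext K N); split => //; apply: corner_sym.
Qed.

Lemma edge_ccw_corner F N : isIE D F -> N \in F ->
  exists K A B, [/\ F = [set N; A], corner K N A B & 0 < cross (edir N A) (edir N B)].
Proof.
move=> IE NF; have [K1 [K2 [K12 s1 s2]]] := isIE_two_tris IE.
have [A [B1 [eF c1]]] := edge_corner IE NF s1.
have [A' [B2 [eF' c2]]] := edge_corner IE NF s2.
have [_ [NA _ _] _] := cornerP c1.
have eA : A = A' by apply: (pair_inj NA); rewrite -eF -eF'.
rewrite -{}eA in c2.
have opp := corners_opposite K12 c1 c2.
have [pos|neg] := ltP 0 (cross (edir N A) (edir N B1)); first by exists K1, A, B1.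
by exists K2, A, B2; split => //; nra.
Qed.

Lemma sum_if_eq (I : finType) (P : pred I) (j : I) (g : I -> R) :
  \sum_(i | P i) (if i == j then g i else 0) = if P j then g j else 0.
Proof.
rewrite big_mkcond (bigD1 j) //= eqxx big1 ?addr0 // => i /negbTE ->.
by case: ifP.
Qed.

Lemma locv_hatK M K K' M' : M' \in vset D K' ->
  locv D (hatK D M K) K' M' = if (K' == K) && (M' == M) then 1 else 0.
Proof.
case/imsetP => j _ ->; rewrite /locv /hatK.
by rewrite (big_pred1 j) // => i /=; exact: (inj_eq (@ev_inj K')).
Qed.

Lemma jumpv_hatK M K F M' : M' \in F ->
  jumpv D (hatK D M K) F M' =
  if (F \subset vset D K) && (M' == M) then epsKF D K F else 0.
Proof.
move=> MF; rewrite /jumpv.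
rewrite (eq_bigr (fun K' => if K' == K then
    (if M' == M then epsKF D K' F else 0) else 0)); last first.
  move=> K' sF; rewrite locv_hatK; last exact: (fintype.subsetP sF).
  by case: (K' == K); case: (M' == M); rewrite /= ?mulr1 ?mulr0.
by rewrite sum_if_eq; case: (F \subset vset D K); case: (M' == M).
Qed.

Definition hat_term (mu : Mfun R Vt) K N F := elen D F / 2 * (mu F N * epsKF D K F).

Lemma bform_hatK mu M K : bform D mu (hatK D M K) =
  \sum_(F | isIE D F && ((F \subset vset D K) && (M \in F))) hat_term mu K M F.
Proof.
rewrite big_mkcondr; apply: eq_bigr => F _; rewrite /hat_term.
rewrite (eq_bigr (fun M' => if M' == M then
   (if F \subset vset D K then mu F M * epsKF D K F else 0) else 0)); last first.
  move=> M' M'F; rewrite jumpv_hatK //.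
  by case: eqP => [->|_]; rewrite ?andbT ?andbF ?mulr0 //; case: ifP; rewrite ?mulr0.
by rewrite sum_if_eq; case: (F \subset vset D K); case: (M \in F); rewrite ?mulr0.
Qed.

Lemma bform_hatK_eq0 mu M K :
  (forall F, isIE D F -> F \subset vset D K -> M \in F -> mu F M = 0) ->
  bform D mu (hatK D M K) = 0.
Proof.
move=> mu0; rewrite bform_hatK big1 // => F /and3P[IE sF MF].
by rewrite /hat_term mu0 ?mul0r ?mulr0.
Qed.

Lemma bform_hatK_corner mu K N A B : corner K N A B ->
  bform D mu (hatK D N K) =
    (if isIE D [set N; A] then hat_term mu K N [set N; A] else 0) +
    (if isIE D [set N; B] then hat_term mu K N [set N; B] else 0).
Proof.
move=> cK; have [VK [NA NB AB] _] := cornerP cK.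
have sA : [set N; A] \subset vset D K by rewrite VK finset.subsetUl.
have sB : [set N; B] \subset vset D K by rewrite VK finset.setUAC finset.subsetUl.
have BA : [set N; B] != [set N; A].
  by apply: contra_neq AB => e; apply: pair_inj NA (esym e).
rewrite bform_hatK big_mkcond (bigD1 [set N; A]) //= (bigD1 [set N; B]) //=.
rewrite big1 ?addr0 ?sA ?sB ?setU11 ?andbT //= => F /andP[FA FB].
case: ifP => // /and3P[IE sF NF].
by case: (corner_edges cK sF NF (isIE_card2 IE)) => eF;
  [move: FA | move: FB]; rewrite eF eqxx.
Qed.

Lemma isPlus_corner K N A B : corner K N A B -> isIE D [set N; A] ->
  isPlus D K [set N; A] = (dot (nF D [set N; A]) (edir N B) < 0).
Proof.
move=> cK IE; have [VK [NA NB AB] _] := cornerP cK.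
have perp := nF_perp IE NA.
set n := nF D [set N; A] in perp *.
have nA : dot n (coord A) = dot n (coord N).
  by move: perp; rewrite /dot /edir /psub /=; lra.
have -> : (dot n (edir N B) < 0) = (dot n (coord B) < dot n (coord N)).
  by apply/idP/idP; rewrite /dot /edir /psub /= => h; lra.
apply/idP/idP => [plus|below].
  have /imsetP[iB _ eB] : B \in vset D K by rewrite VK !inE eqxx orbT.
  have /imsetP[iN _ eN] : N \in vset D K by rewrite VK !inE eqxx.
  move/forallP/(_ iB)/forallP/(_ iN)/implyP: plus; rewrite /vx -eB -eN; apply.
  by rewrite !inE eqxx orTb andbT negb_or eq_sym NB eq_sym AB.
apply/forallP => i; apply/forallP => j; apply/implyP; rewrite /vx !inE => /andP[iF jF].
have -> : ev K i = B.
  by case: (corner_vertex cK (ev_in_vset K i)) => e; rewrite e ?eqxx ?orbT // in iF.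
by case/orP: jF => /eqP ->; rewrite ?nA.
Qed.

Lemma sgnN_epsKF_corner K N A B : corner K N A B -> isIE D [set N; A] ->
  sgnN D N [set N; A] * epsKF D K [set N; A] =
  if 0 < cross (edir N A) (edir N B) then -1 else 1.
Proof.
move=> cK IE; have [_ [NA _ _] _] := cornerP cK.
rewrite /sgnN /epsKF (isPlus_corner cK IE) (otherend_pair NA) -/(edir N A).
have [n1 _] := nF_unit_perp IE; have perp := nF_perp IE NA.
have Y0 := corner_cross_neq0 cK.
have a_gt0 := dot_gt0 (edir_neq0 NA).
set n := nF D [set N; A] in n1 perp *.
set a := edir N A in perp Y0 a_gt0 *; set b := edir N B in Y0 *.
(* As [n] is a unit normal to [a]: [(a x n)^2 = |a|^2] and
   [(a x n) (a x b) = |a|^2 (n . b)]. *)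
have XY : cross a n * cross a b = dot a a * dot n b - dot a b * dot n a.
  by rewrite /cross /dot; ring.
have XX : cross a n * cross a n = dot a a * dot n n - dot n a * dot n a.
  by rewrite /cross /dot; ring.
rewrite perp mulr0 subr0 in XY; rewrite perp n1 mulr0 subr0 mulr1 in XX.
have Xne : cross a n != 0.
  by apply: contraTneq a_gt0 => X0; rewrite -XX X0 mulr0 ltxx.
move: Xne Y0; rewrite !neq_lt => /orP[] hX /orP[] hY;
  rewrite ?hX ?hY ?(lt_gtF hX) ?(lt_gtF hY) /=;
  case: ltP => hZ; rewrite ?mulr1 ?mulrN1 ?opprK //; exfalso; nra.
Qed.

Definition sweight (mu : Mfun R Vt) N F := sgnN D N F * (elen D F * mu F N).

Lemma hat_term_corner mu K N A B : corner K N A B -> isIE D [set N; A] ->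
  hat_term mu K N [set N; A] =
  (if 0 < cross (edir N A) (edir N B) then -1 else 1) / 2 * sweight mu N [set N; A].
Proof.
move=> cK IE; rewrite -(sgnN_epsKF_corner cK IE) /sweight.
have s2 : sgnN D N [set N; A] * sgnN D N [set N; A] = 1.
  by rewrite /sgnN; case: ifP; rewrite ?mulrNN mulr1.
transitivity (hat_term mu K N [set N; A] * (sgnN D N [set N; A] * sgnN D N [set N; A])).
  by rewrite s2 mulr1.
by rewrite /hat_term; ring.
Qed.

Lemma fan_step mu K N A B : corner K N A B -> bform D mu (hatK D N K) = 0 ->
  isIE D [set N; A] ->
  if isIE D [set N; B] then sweight mu N [set N; B] = sweight mu N [set N; A]
  else sweight mu N [set N; A] = 0.
Proof.
move=> cK b0 IEA.
rewrite (bform_hatK_corner _ cK) IEA (hat_term_corner _ cK IEA) in b0.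
have sgnB := hat_term_corner mu (corner_sym cK).
rewrite cross_swap oppr_gt0 in sgnB.
have := corner_cross_neq0 cK; rewrite neq_lt => ab.
case IEB: (isIE D [set N; B]) b0; rewrite ?sgnB // ?addr0;
  case/orP: ab => h; rewrite ?h ?(lt_gtF h) /=; lra.
Qed.

Definition edge_dir N F := edir N (otherend D N F).

Lemma edge_dir_pair N A : N != A -> edge_dir N [set N; A] = edir N A.
Proof. by move=> NA; rewrite /edge_dir otherend_pair. Qed.

Definition fan_closed N (S : pred {set Vt}) : Prop :=
  (forall F, S F -> isIE D F /\ N \in F) /\
  (forall K A B, corner K N A B -> S [set N; A] -> S [set N; B]).

Lemma fan_sweep N S w : fan_closed N S ->
  (exists F, S F && leftof (edge_dir N F) w) ->
  exists K A B, [/\ corner K N A B, S [set N; A], S [set N; B],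
    leftof (edir N A) w && ~~ leftof (edir N B) w &
    0 < cross (edir N A) (edir N B)].
Proof.
move=> [S_edge S_step] [F0 CF0].
pose C F := S F && leftof (edge_dir N F) w.
pose ahead F := [set G | C G && (0 < cross (edge_dir N F) (edge_dir N G))].
(* Take the edge of [C] with fewest edges of [C] counter-clockwise ahead of
   it; the next edge of its counter-clockwise triangle must then leave [C]. *)
case: (@arg_minnP _ F0 C (fun F => #|ahead F|) CF0) => F /andP[SF hF] Fmin.
have [IE NF] := S_edge F SF.
have [K [A [B [eF cK ab]]]] := edge_ccw_corner IE NF.
have [_ [NA NB _] _] := cornerP cK.
have SA : S [set N; A] by rewrite -eF.
have SB := S_step _ _ _ cK SA.
have dirF : edge_dir N F = edir N A by rewrite eF edge_dir_pair.
exists K, A, B; split => //; rewrite -dirF hF /=.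
apply/negP => hB; pose G := [set N; B].
have dirG : edge_dir N G = edir N B by rewrite edge_dir_pair.
have CG : C G by rewrite /C SB dirG.
have := Fmin G CG; rewrite leqNgt => /negP; apply; apply: proper_card.
apply/properP; split.
  apply/fintype.subsetP => H; rewrite !inE => /andP[CH hGH]; rewrite CH /=.
  case/andP: CH => _ hH.
  by apply: (leftof_trans hF _ hH _ hGH); rewrite ?dirF dirG.
by exists G; rewrite !inE CG /= ?cross_self ?ltxx // dirF dirG.
Qed.

Lemma fan_cover N S u : fan_closed N S -> (exists F, S F) ->
  exists K A B, [/\ corner K N A B, S [set N; A], S [set N; B] &
    exists al be, [/\ 0 <= al, 0 <= be & u = lincomb al be (edir N A) (edir N B)]].
Proof.
move=> hS [F0 SF0]; have [IE0 NF0] := hS.1 _ SF0.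
have [A0 NA0 eF0] := card2_pair (isIE_card2 IE0) NF0.
have [->|u0] := eqVneq u (0, 0).
  have [K [_ [_ s1 _]]] := isIE_two_tris IE0.
  have [A [B [eF cK]]] := edge_corner IE0 NF0 s1.
  have SA : S [set N; A] by rewrite -eF.
  exists K, A, B; split => //; first exact: hS.2 _ _ _ cK SA.
  by exists 0, 0; rewrite /lincomb !mul0r addr0.
have [/existsP hu|hno] := boolP [exists F, S F && leftof (edge_dir N F) u].
  have [K [A [B [cK SA SB /andP[hA hB] ab]]]] := fan_sweep hS hu.
  exists K, A, B; split => //.
  exists (cross u (edir N B) / cross (edir N A) (edir N B)),
         (cross (edir N A) u / cross (edir N A) (edir N B)).
  split; last exact: lincomb_cramer (lt0r_neq0 ab).
    apply: divr_ge0 (ltW ab); rewrite cross_swap oppr_ge0 leNgt.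
    by apply: contra hB => bu; rewrite /leftof bu.
  exact: divr_ge0 (leftof_cross_ge0 hA) (ltW ab).
exfalso.
have hno' F : S F -> ~~ leftof (edge_dir N F) u.
  by move=> SF; apply: contra hno => h; apply/existsP; exists F; rewrite SF.
(* Every edge of the fan sees [u] on its right, hence [-u] on its left;
   sweeping towards [-u] then produces an edge seeing neither. *)
have opp : exists F, S F && leftof (edge_dir N F) (pscale (-1) u).
  exists F0; rewrite SF0 /=; have := leftof_or_opp (edir_neq0 NA0) u0.
  by rewrite -(edge_dir_pair NA0) -eF0 (negbTE (hno' _ SF0)).
have [K [A [B [cK _ SB /andP[_ hB] _]]]] := fan_sweep hS opp.
have [_ [_ NB _] _] := cornerP cK.
have := leftof_or_opp (edir_neq0 NB) u0.
by rewrite (negbTE hB) orbF -(edge_dir_pair NB) (negbTE (hno' _ SB)).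
Qed.

Lemma fan_meet N S S' : fan_closed N S -> fan_closed N S' ->
  (exists F, S F) -> (exists F, S' F) -> exists F, S F /\ S' F.
Proof.
move=> hS hS' neS [F0 SF0]; have [IE0 NF0] := hS'.1 _ SF0.
have [K [_ [_ s1 _]]] := isIE_two_tris IE0.
have [A [B [eF cK]]] := edge_corner IE0 NF0 s1.
have SA : S' [set N; A] by rewrite -eF.
have [K' [A' [B' [cK' SA' _ [al [be [al0 be0 med]]]]]]] :=
  fan_cover (lincomb 1 1 (edir N A) (edir N B)) hS neS.
have [eK|KK'] := eqVneq K K'; last by case: (median_notin_cone KK' cK cK' al0 be0 med).
exists [set N; A']; split => //; rewrite -{}eK in cK'.
have [VK' [NA' _ _] _] := cornerP cK'.
have : A' \in vset D K by rewrite VK' !inE eqxx orbT.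
case/(corner_vertex cK) => eA'; rewrite eA'.
- by rewrite eA' eqxx in NA'.
- exact: SA.
- exact: hS'.2 _ _ _ cK SA.
Qed.

Definition corner_size K N : R :=
  norm1 (edir N (vnext K N)) + norm1 (edir N (vprev K N)).

Lemma corner_sizeE K N A B : corner K N A B ->
  norm1 (edir N A) + norm1 (edir N B) = corner_size K N.
Proof. by case=> _ [] [-> ->]; rewrite // addrC. Qed.

Lemma fan_interior N S : fan_closed N S -> (exists F, S F) -> interiorV D N.
Proof.
move=> hS neS.
pose W := \sum_K corner_size K N / `|dblarea D K|.
have W_ge0 : 0 <= W.
  by apply: sumr_ge0 => K _; rewrite divr_ge0 ?addr_ge0 ?normr_ge0.
exists (1 + W)^-1 => [|x [x1 x2]]; first by rewrite invr_gt0; lra.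
set e := (1 + W)^-1 in x1 x2.
have [K [A [B [cK _ _ [al [be [al0 be0 xN]]]]]]] := fan_cover (psub x (coord N)) hS neS.
have [_ _ crossK] := cornerP cK.
have dbl_gt0 : 0 < `|dblarea D K| by rewrite normr_gt0 dblarea_neq0.
set a := edir N A in xN crossK; set b := edir N B in xN crossK.
have u1 : `|(psub x (coord N)).1| <= e by exact: ltW.
have u2 : `|(psub x (coord N)).2| <= e by exact: ltW.
have al_le : al * `|dblarea D K| <= e * norm1 b.
  have := cross_norm1_le b u1 u2.
  by rewrite xN cross_lincombl cross_self mulr0 addr0 normrM crossK ger0_norm.
have be_le : be * `|dblarea D K| <= e * norm1 a.
  have := cross_norm1_le a u1 u2.
  rewrite xN cross_lincombl cross_self mulr0 add0r normrM cross_swap normrN.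
  by rewrite crossK ger0_norm.
have size_lt : e * corner_size K N < `|dblarea D K|.
  have : corner_size K N / `|dblarea D K| <= W.
    rewrite /W (bigD1 K) //= lerDl sumr_ge0 // => K' _.
    by rewrite divr_ge0 ?addr_ge0 ?normr_ge0.
  rewrite ler_pdivrMr // => hW.
  have e_gt0 : 0 < e by rewrite invr_gt0; lra.
  have eW : e * (1 + W) = 1 by rewrite mulVf // gt_eqF //; lra.
  nra.
exists K; rewrite -(padd_psub (coord N) x) xN; apply: corner_tri => //.
rewrite -(ler_pM2r dbl_gt0) mul1r mulrDl.
by rewrite -(corner_sizeE cK) -/a -/b in size_lt; lra.
Qed.

Definition level_fan mu N c : pred {set Vt} :=
  fun F => [&& isIE D F, N \in F & sweight mu N F == c].

Lemma level_fan_closed mu N c : c != 0 ->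
  (forall K, N \in vset D K -> bform D mu (hatK D N K) = 0) ->
  fan_closed N (level_fan mu N c).
Proof.
move=> c0 hb; split => [F /and3P[IE NF _] // | K A B cK /and3P[IEA _ /eqP yA]].
have := fan_step cK (hb K cK.1) IEA; rewrite yA.
case: ifP => IEB; last by move=> y0; rewrite y0 eqxx in c0.
by move=> yB; rewrite /level_fan IEB setU11 yB eqxx.
Qed.

Lemma vertex_multiplier_eq0 N mu :
  (forall K, N \in vset D K -> bform D mu (hatK D N K) = 0) ->
  (interiorV D N -> \sum_(F | isIE D F && (N \in F)) sgnN D N F * elen D F * mu F N = 0) ->
  forall F, isIE D F -> N \in F -> mu F N = 0.
Proof.
move=> hb hMh F0 IE0 NF0; apply/eqP/negPn/negP => mu0.
pose c := sweight mu N F0.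
have c0 : c != 0.
  have sgn0 : sgnN D N F0 != 0 by rewrite /sgnN; case: ifP => _; rewrite ?oppr_eq0 oner_eq0.
  by rewrite /c /sweight !mulf_neq0 // lt0r_neq0 // elen_gt0 // isIE_card2.
have level_ne F : isIE D F -> N \in F -> exists G, level_fan mu N (sweight mu N F) G.
  by move=> IE NF; exists F; rewrite /level_fan IE NF eqxx.
(* All nonzero weights at N coincide, since their level fans must meet. *)
have levels F : isIE D F -> N \in F -> sweight mu N F = (sweight mu N F == c)%:R * c.
  move=> IE NF; have [->|y0] := eqVneq (sweight mu N F) 0.
    by rewrite eq_sym (negbTE c0) mul0r.
  have [G [/and3P[_ _ /eqP Gy] /and3P[_ _ /eqP Gc]]] :=
    fan_meet (level_fan_closed y0 hb) (level_fan_closed c0 hb)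
             (level_ne F IE NF) (level_ne F0 IE0 NF0).
  by rewrite -Gy Gc eqxx mul1r.
have := hMh (fan_interior (level_fan_closed c0 hb) (level_ne F0 IE0 NF0)).
rewrite (eq_bigr (fun F => (sweight mu N F == c)%:R * c)); last first.
  by move=> F /andP[IE NF]; rewrite -mulrA -levels.
rewrite -mulr_suml => /eqP; rewrite mulf_eq0 (negbTE c0) orbF.
rewrite (bigD1 F0) /=; last by rewrite IE0 NF0.
by rewrite eqxx gt_eqF // ltr_pwDl // sumr_ge0 // => F _; rewrite ler0n.
Qed.

Lemma bform_sub_sum (th : Mfun R Vt) (theta : Vt -> Mfun R Vt) w :
  bform D (fun F M => th F M - \sum_N theta N F M) w =
  bform D th w - \sum_N bform D (theta N) w.
Proof.
rewrite /bform exchange_big /= -sumrB; apply: eq_bigr => F _.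
rewrite -mulr_sumr -mulrBr; congr (_ * _).
rewrite exchange_big /= -sumrB; apply: eq_bigr => M _.
by rewrite mulrBl mulr_suml.
Qed.

Lemma inMh_sub_sum (th : Mfun R Vt) (theta : Vt -> Mfun R Vt) :
  inMh D th -> (forall N, inMh D (theta N)) ->
  inMh D (fun F M => th F M - \sum_N theta N F M).
Proof.
move=> th_Mh theta_Mh N NI.
under eq_bigr => F _ do rewrite mulrBr mulr_sumr.
rewrite sumrB th_Mh // exchange_big /= big1 ?subr0 // => N' _.
exact: theta_Mh.
Qed.

Definition local_multiplier (uh : DGfun R El) N (th : Mfun R Vt) : Prop :=
  if [exists F, isIE D F && (N \in F)] then
    [/\ inMh D th,
        (forall F M, isIE D F -> N \notin F -> M \in F -> th F M = 0) &
        forall K, N \in vset D K ->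
          bform D th (hatK D N K) = resid D uh (hatK D N K) /\
          (forall M, M \in vset D K -> M != N -> bform D th (hatK D M K) = 0)]
  else forall F M, isIE D F -> M \in F -> th F M = 0.

Lemma local_multiplier_inMh uh N th : local_multiplier uh N th -> inMh D th.
Proof.
rewrite /local_multiplier; case: ifP => [_ [] // | _ th0] N' _.
by rewrite big1 // => F /andP[IE NF]; rewrite th0 ?mulr0.
Qed.

Lemma sum_local_multipliers_hatK uh (theta : Vt -> Mfun R Vt) M K :
  (forall N, local_multiplier uh N (theta N)) ->
  M \in vset D K -> [exists F, isIE D F && (M \in F)] ->
  \sum_N bform D (theta N) (hatK D M K) = resid D uh (hatK D M K).
Proof.
move=> loc MK hM; rewrite (bigD1 M) //= big1 ?addr0.
  by have := loc M; rewrite /local_multiplier hM => -[_ _ /(_ K MK) []].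
move=> N NM; have := loc N; rewrite /local_multiplier.
case: ifP => [_ [_ off_N at_N] | _ th0]; last first.
  by apply: bform_hatK_eq0 => F IE _ MF; apply: th0.
have [NK|NK] := boolP (N \in vset D K); first by apply: (at_N K NK).2; rewrite // eq_sym.
apply: bform_hatK_eq0 => F IE sF MF; apply: off_N => //.
by apply: contra NK; apply: (fintype.subsetP sF).
Qed.

End Mesh.

Theorem mainTheorem4 (R : realType) (Vt El : finType) (D : fem_data R Vt El)
  (HD : fem_assumptions D)
  (uh : DGfun R El) (thetah : Mfun R Vt)
  (* (uh, thetah) in DG_h x M_h solves the mixed problem *)
  (Hth : inMh D thetah)
  (Hmix1 : forall w : DGfun R El, aht D uh w + bform D thetah w = lh D w)
  (Hmix2 : forall mu : Mfun R Vt, inMh D mu -> bform D mu uh = 0)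
  (* the local multipliers theta_N *)
  (theta : Vt -> Mfun R Vt)
  (HthN : forall N : Vt,
     if [exists F, isIE D F && (N \in F)] then
       [/\ inMh D (theta N),
           (forall F M, isIE D F -> N \notin F -> M \in F -> theta N F M = 0) &
           forall K, N \in vset D K ->
             bform D (theta N) (hatK D N K) = resid D uh (hatK D N K) /\
             (forall M, M \in vset D K -> M != N ->
                bform D (theta N) (hatK D M K) = 0)]
     else forall F M, isIE D F -> M \in F -> theta N F M = 0) :
  forall F M, isIE D F -> M \in F -> thetah F M = \sum_(N : Vt) theta N F M.
Proof.
move=> F M IE MF; apply/eqP; rewrite -subr_eq0; apply/eqP.
pose mu F M := thetah F M - \sum_N theta N F M.
have theta_Mh N : inMh D (theta N) := local_multiplier_inMh (HthN N).
have thetah_resid w : bform D thetah w = resid D uh w.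
  by rewrite /resid -(Hmix1 w) addrC addKr.
have mu_hatK M' K : M' \in vset D K -> bform D mu (hatK D M' K) = 0.
  move=> M'K; have [hM'|hM'] := boolP [exists G, isIE D G && (M' \in G)].
    rewrite bform_sub_sum thetah_resid.
    by rewrite (sum_local_multipliers_hatK HD HthN M'K hM') subrr.
  apply: (bform_hatK_eq0 HD) => G IG _ M'G.
  by move/existsPn: hM' => /(_ G); rewrite IG M'G.
have mu_Mh : inMh D mu := inMh_sub_sum Hth theta_Mh.
exact: (vertex_multiplier_eq0 HD (mu_hatK M) (mu_Mh M) IE MF).
Qed.
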